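(* Let $(X,d,f)$ be a dynamical system and let $\mathcal{A}=\{\mathcal{U}_n\}_{n\in\mathbb{N}}$ be a complete tame defining sequence of $(X,d)$. Assume that $f$ has the finite shadowing property. Then: (i) $f$ is conjugate to the inverse limit of a sequence of 1-step shifts on a countable alphabet; more precisely, $(X,d,f)$ is topologically conjugate to $\big(\varprojlim(\hookrightarrow,\mathcal{PO}(\mathcal{U}_n)),\sigma^*\big)$; (ii) if moreover $f$ is uniformly continuous, then this conjugacy can be chosen uniform, i.e. the conjugating homeomorphism and its inverse are uniformly continuous.
   Context: All spaces are nonempty separable metrizable spaces. A dynamical system $(X,d,f)$ is a space $X$ with an admissible metric $d$ and a continuous map $f:X\to X$. A partition of $X$ is a cover by pairwise disjoint nonempty clopen sets; for a partition $\mathcal{U}$ and $x\in X$, $\mathcal{U}[x]$ is the element of $\mathcal{U}$ containing $x$. A defining sequence of $X$ is a sequence $\{\mathcal{U}_n\}_{n\in\mathbb{N}}$ of partitions such that each element of $\mathcal{U}_{n+1}$ is contained in an element of $\mathcal{U}_n$, and $\bigcup_n\mathcal{U}_n$ is a basis of the topology. It is complete if whenever $U_n\in\mathcal{U}_n$ with $U_{n+1}\subseteq U_n$ for all $n$, $\bigcap_nU_n\neq\emptyset$. It is tame (with respect to $d$) if $S_n:=\sup\{\operatorname{diam}(O):O\in\mathcal{U}_n\}\to0$ and for each $n$ there is $\rho_n>0$ with $d(x_1,x_2)\ge\rho_n$ whenever $x_1,x_2$ lie in distinct elements of $\mathcal{U}_n$. A $\delta$-pseudo-orbit is a (finite or infinite)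 sequence $(x_n)$ with $d(f(x_n),x_{n+1})<\delta$ for all consecutive indices; $x$ $\varepsilon$-shadows $(x_n)$ if $d(f^n(x),x_n)<\varepsilon$ for all indices $n$. $f$ has the finite shadowing property if for every $\varepsilon>0$ there is $\delta>0$ such that every finite $\delta$-pseudo-orbit is $\varepsilon$-shadowed by some point; the shadowing property is the same with infinite pseudo-orbits. For a partition $\mathcal{U}$ (with the discrete metric), $\mathcal{PO}(\mathcal{U})=\{(O_i)_{i\in\mathbb{N}}\in\mathcal{U}^{\mathbb{N}}: f(O_i)\cap O_{i+1}\neq\emptyset\ \forall i\}$, a 1-step shift space (shift space over the countable alphabet $\mathcal{U}$ defined by forbidden words of length 2) with shift map $\sigma(O_i)_i=(O_{i+1})_i$ and metric $d((O_i),(O'_i))=1/(i+1)$ for the least $i$ with $O_i\ne O'_i$. The bonding map $\hookrightarrow:\mathcal{PO}(\mathcal{U}_{n+1})\to\mathcal{PO}(\mathcal{U}_n)$ sends $(O_i)$ to the unique $(V_i)\in\mathcal{U}_n^{\mathbb{N}}$ with $O_i\subseteq V_i$ for all $i$. The inverse limit $\varprojlim(\hookrightarrow,\mathcal{PO}(\mathcal{U}_n))=\{(y_n)\in\prod_n\mathcal{PO}(\mathcal{U}_n): y_n=\hookrightarrow(y_{n+1})\ \forall n\}$, with metric $d_\Pi((y_n),(z_n))=\max_n d(y_n,z_n)/(n+1)$, and $\sigma^*$ is the restriction to it of the product of the shift maps. *)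

From Stdlib Require Import Reals Lra Lia Classical ClassicalEpsilon.
Open Scope R_scope.

Section Defs.
Context {X : Type}.

Definition subset (A B : X -> Prop) : Prop := forall x, A x -> B x.

Definition is_metric (d : X -> X -> R) : Prop :=
  (forall x y, 0 <= d x y) /\ (forall x y, d x y = 0 <-> x = y) /\
  (forall x y, d x y = d y x) /\ (forall x y z, d x z <= d x y + d y z).

Definition is_open (d : X -> X -> R) (A : X -> Prop) : Prop :=
  forall x, A x -> exists e, 0 < e /\ forall y, d x y < e -> A y.
Definition is_closed (d : X -> X -> R) (A : X -> Prop) : Prop :=
  is_open d (fun x => ~ A x).
Definition is_clopen d A := is_open d A /\ is_closed d A.

(* separable: there is a countable dense subset (X is nonempty) *)
Definition separable (d : X -> X -> R) : Prop :=
  exists s : nat -> X, forall x e, 0 < e -> exists n, d x (s n) < e.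

Definition continuous_map (d : X -> X -> R) (f : X -> X) : Prop :=
  forall x e, 0 < e -> exists dl, 0 < dl /\ forall y, d x y < dl -> d (f x) (f y) < e.
Definition unif_continuous_map (d : X -> X -> R) (f : X -> X) : Prop :=
  forall e, 0 < e -> exists dl, 0 < dl /\ forall x y, d x y < dl -> d (f x) (f y) < e.

Definition dyn_system (d : X -> X -> R) (f : X -> X) : Prop :=
  inhabited X /\ is_metric d /\ separable d /\ continuous_map d f.

Definition partition (d : X -> X -> R) (U : (X -> Prop) -> Prop) : Prop :=
  (forall A, U A -> (exists x, A x) /\ is_clopen d A) /\
  (forall A B, U A -> U B -> A <> B -> forall x, A x -> B x -> False) /\
  (forall x, exists A, U A /\ A x).

Definition is_basis (d : X -> X -> R) (B : (X -> Prop) -> Prop) : Prop :=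
  (forall A, B A -> is_open d A) /\
  (forall V, is_open d V -> forall x, V x -> exists A, B A /\ A x /\ subset A V).

Definition defining_sequence d (U : nat -> (X -> Prop) -> Prop) : Prop :=
  (forall n, partition d (U n)) /\
  (forall n A, U (S n) A -> exists B, U n B /\ subset A B) /\
  is_basis d (fun A => exists n, U n A).

Definition complete_seq (U : nat -> (X -> Prop) -> Prop) : Prop :=
  forall V : nat -> (X -> Prop), (forall n, U n (V n)) ->
    (forall n, subset (V (S n)) (V n)) -> exists x, forall n, V n x.

(* tame: S_n := sup of diameters of elements of U_n tends to 0, and
   distinct elements of U_n are at distance >= rho_n > 0 *)
Definition tame_seq d (U : nat -> (X -> Prop) -> Prop) : Prop :=
  (forall e, 0 < e -> exists N, forall n, (N <= n)%nat ->
     forall O, U n O -> forall x y, O x -> O y -> d x y <= e) /\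
  (forall n, exists rho, 0 < rho /\ forall A B x1 x2, U n A -> U n B -> A <> B ->
     A x1 -> B x2 -> rho <= d x1 x2).

Definition finite_shadowing d (f : X -> X) : Prop :=
  forall e, 0 < e -> exists dl, 0 < dl /\
    forall (k : nat) (x : nat -> X),
      (forall i, (i < k)%nat -> d (f (x i)) (x (S i)) < dl) ->
      exists z, forall i, (i <= k)%nat -> d (Nat.iter i f z) (x i) < e.

Definition PO (f : X -> X) (U : (X -> Prop) -> Prop) (O : nat -> (X -> Prop)) : Prop :=
  forall i, U (O i) /\ exists x, O i x /\ O (S i) (f x).

(* metric on PO(U): 1/(i+1) for the least i with O_i <> O'_i, 0 if equal *)
Definition dPO (O O' : nat -> (X -> Prop)) : R :=
  match excluded_middle_informative (exists i, O i <> O' i) with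
  | left _ => / INR (S (epsilon (inhabits 0%nat)
                 (fun i => O i <> O' i /\ forall j, (j < i)%nat -> O j = O' j)))
  | right _ => 0
  end.

(* V = ↪(O) : V is the unique element of U^N with O_i ⊆ V_i for all i *)
Definition bond (U : (X -> Prop) -> Prop) (O V : nat -> (X -> Prop)) : Prop :=
  forall i, U (V i) /\ subset (O i) (V i).

Definition inv_lim (f : X -> X) (U : nat -> (X -> Prop) -> Prop)
    (y : nat -> nat -> (X -> Prop)) : Prop :=
  forall n, PO f (U n) (y n) /\ bond (U n) (y (S n)) (y n).

(* d_Pi(y,z) = max_n d(y_n,z_n)/(n+1) *)
Definition dPi (y z : nat -> nat -> (X -> Prop)) : R :=
  epsilon (inhabits 0)
    (fun m => (exists n, m = dPO (y n) (z n) / INR (S n)) /\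
              forall n, dPO (y n) (z n) / INR (S n) <= m).

Definition sigma_star (y : nat -> nat -> (X -> Prop)) : nat -> nat -> (X -> Prop) :=
  fun n i => y n (S i).

Definition conjugacy d f U (h : X -> nat -> nat -> (X -> Prop))
    (g : (nat -> nat -> (X -> Prop)) -> X) : Prop :=
  (forall x, inv_lim f U (h x)) /\
  (forall x, g (h x) = x) /\
  (forall y, inv_lim f U y -> h (g y) = y) /\
  (forall x, h (f x) = sigma_star (h x)) /\
  (forall x e, 0 < e -> exists dl, 0 < dl /\
     forall x', d x x' < dl -> dPi (h x) (h x') < e) /\
  (forall y, inv_lim f U y -> forall e, 0 < e -> exists dl, 0 < dl /\
     forall y', inv_lim f U y' -> dPi y y' < dl -> d (g y) (g y') < e).

Definition uniform_homeo d f U (h : X -> nat -> nat -> (X -> Prop))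
    (g : (nat -> nat -> (X -> Prop)) -> X) : Prop :=
  (forall e, 0 < e -> exists dl, 0 < dl /\
     forall x x', d x x' < dl -> dPi (h x) (h x') < e) /\
  (forall e, 0 < e -> exists dl, 0 < dl /\
     forall y y', inv_lim f U y -> inv_lim f U y' -> dPi y y' < dl -> d (g y) (g y') < e).

End Defs.

From Stdlib Require Import Reals Lra Lia Classical ClassicalEpsilon FunctionalExtensionality Wf_nat.
Open Scope R_scope.

(* A point x is coded by its itinerary h(x): at level n, the sequence of cells
   of U_n visited by its orbit.  The gap rho_n between distinct cells of U_n
   makes itineraries locally constant, so h is (uniformly) continuous when f
   is.  Conversely, for y in the inverse limit the cells y_n(0) are nested and
   their diameters shrink, so by completeness they meet in exactly one point
   g(y), and g is uniformly continuous.  The real content is that the orbit of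
   g(y) follows y: at a fine level n the sequence y_n is an S_n-pseudo-orbit of
   cells, a shadowing orbit starts near g(y), hence f^i(g y) lies arbitrarily
   close to the cell y_m(i), and the gap rho_m puts it inside. *)

Lemma inv_S_pos k : 0 < / INR (S k).
Proof. apply Rinv_0_lt_compat, lt_0_INR; lia. Qed.

Lemma inv_S_le k n : (k <= n)%nat -> / INR (S n) <= / INR (S k).
Proof. intro Hkn. apply Rinv_le_contravar; [apply lt_0_INR | apply le_INR]; lia. Qed.

Lemma inv_S_lt k n : (k < n)%nat -> / INR (S n) < / INR (S k).
Proof.
  intro Hkn.
  apply Rinv_lt_contravar; [apply Rmult_lt_0_compat; apply lt_0_INR | apply lt_INR]; lia.
Qed.

Lemma inv_S_le_1 k : / INR (S k) <= 1.
Proof. rewrite <- Rinv_1. apply (inv_S_le 0); lia. Qed.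

Lemma inv_S_lt_ex e : 0 < e -> exists K, / INR (S K) < e.
Proof.
  intro He. destruct (archimed_cor1 e He) as [N [HN HN0]].
  exists (pred N). now rewrite Nat.succ_pred_pos.
Qed.

Lemma finite_argmax (a : nat -> R) K :
  exists n, (n <= K)%nat /\ forall j, (j <= K)%nat -> a j <= a n.
Proof.
  induction K as [|K [n [HnK Hmax]]].
  - exists 0%nat. split; [lia|]. intros j Hj. replace j with 0%nat by lia. lra.
  - destruct (Rle_lt_dec (a (S K)) (a n)) as [Hle|Hlt].
    + exists n. split; [lia|]. intros j Hj.
      destruct (Nat.eq_dec j (S K)) as [->|]; [lra | apply Hmax; lia].
    + exists (S K). split; [lia|]. intros j Hj.
      destruct (Nat.eq_dec j (S K)) as [->|]; [lra|].
      pose proof (Hmax j ltac:(lia)). lra.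
Qed.

Lemma vanishing_seq_attains_max (a : nat -> R) :
  (forall n, 0 <= a n <= / INR (S n)) -> exists n, forall j, a j <= a n.
Proof.
  intro Ha. destruct (classic (exists N, 0 < a N)) as [[N HN]|Hzero].
  - destruct (inv_S_lt_ex _ HN) as [K HK].
    destruct (finite_argmax a (max N K)) as [n [_ Hmax]].
    exists n. intro j. destruct (Compare_dec.le_lt_dec j (max N K)) as [Hj|Hj]; auto.
    pose proof (Hmax N ltac:(lia)). pose proof (Ha j). pose proof (inv_S_le K j ltac:(lia)).
    lra.
  - exists 0%nat. intro j. pose proof (Ha 0%nat).
    assert (~ 0 < a j) by (intro; apply Hzero; eauto). lra.
Qed.

Section FirstDifferenceMetric.
Context {X : Type}.
Implicit Types (O : nat -> X -> Prop) (y z : nat -> nat -> X -> Prop).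

Lemma dPO_first_diff O O' :
  (exists i, O i <> O' i /\ (forall j, (j < i)%nat -> O j = O' j) /\ dPO O O' = / INR (S i))
  \/ ((forall i, O i = O' i) /\ dPO O O' = 0).
Proof.
  unfold dPO. destruct (excluded_middle_informative _) as [Hdiff|Hsame].
  - left.
    assert (Hleast : exists i, O i <> O' i /\ forall j, (j < i)%nat -> O j = O' j).
    { destruct (dec_inh_nat_subset_has_unique_least_element (fun i => O i <> O' i))
        as [i [[Hi Hmin] _]]; [intro; apply classic | exact Hdiff |].
      exists i. split; auto. intros j Hj. apply NNPP. intro Hne. specialize (Hmin j Hne). lia. }
    destruct (epsilon_spec (inhabits 0%nat) _ Hleast) as [Hi Hbelow]. eauto.
  - right. split; auto. intro i. apply NNPP. intro Hne. apply Hsame. eauto.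
Qed.

Lemma dPO_range O O' : 0 <= dPO O O' <= 1.
Proof.
  destruct (dPO_first_diff O O') as [[i [_ [_ ->]]]|[_ ->]]; [|lra].
  pose proof (inv_S_pos i). pose proof (inv_S_le_1 i). lra.
Qed.

Lemma dPO_lt_inv_S O O' k :
  dPO O O' < / INR (S k) <-> forall j, (j <= k)%nat -> O j = O' j.
Proof.
  pose proof (inv_S_pos k).
  destruct (dPO_first_diff O O') as [[i [Hi [Hbelow ->]]]|[Hsame ->]].
  - split.
    + intros Hlt j Hj. apply Hbelow.
      destruct (Compare_dec.le_lt_dec i k) as [Hik|]; [|lia].
      pose proof (inv_S_le i k Hik). lra.
    + intro Hagree. apply inv_S_lt.
      destruct (Compare_dec.le_lt_dec i k) as [Hik|]; [|lia].
      exfalso. exact (Hi (Hagree i Hik)).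
  - split; auto.
Qed.

Lemma dPO_div_S_bounds O O' n :
  0 <= dPO O O' / INR (S n) <= dPO O O' /\ dPO O O' / INR (S n) <= / INR (S n).
Proof.
  pose proof (dPO_range O O'). pose proof (inv_S_pos n). pose proof (inv_S_le_1 n).
  unfold Rdiv. split; [split|].
  - apply Rmult_le_pos; lra.
  - rewrite <- (Rmult_1_r (dPO O O')) at 2. apply Rmult_le_compat_l; lra.
  - rewrite <- (Rmult_1_l (/ INR (S n))) at 2. apply Rmult_le_compat_r; lra.
Qed.

Lemma dPi_spec y z :
  (exists n, dPi y z = dPO (y n) (z n) / INR (S n)) /\
  forall n, dPO (y n) (z n) / INR (S n) <= dPi y z.
Proof.
  unfold dPi. apply (epsilon_spec (inhabits 0)).
  destruct (vanishing_seq_attains_max (fun n => dPO (y n) (z n) / INR (S n))) as [n Hmax].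
  - intro n. pose proof (dPO_div_S_bounds (y n) (z n) n). lra.
  - eauto.
Qed.

Lemma dPi_lt y z K e :
  / INR (S K) < e ->
  (forall n j, (n <= K)%nat -> (j <= K)%nat -> y n j = z n j) -> dPi y z < e.
Proof.
  intros HK Hagree. destruct (dPi_spec y z) as [[n ->] _].
  pose proof (dPO_div_S_bounds (y n) (z n) n).
  destruct (Compare_dec.le_lt_dec n K) as [Hn|Hn].
  - assert (dPO (y n) (z n) < / INR (S K)) by (apply dPO_lt_inv_S; auto). lra.
  - pose proof (inv_S_le K n ltac:(lia)). lra.
Qed.

Lemma dPi_lt_inv_S y z N : dPi y z < / INR (S N) -> y N 0%nat = z N 0%nat.
Proof.
  intro Hlt. destruct (dPi_spec y z) as [_ Hge]. specialize (Hge N).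
  assert (Hlt1 : dPO (y N) (z N) < / INR (S 0)).
  { simpl. rewrite Rinv_1. pose proof (inv_S_pos N).
    apply Rmult_lt_reg_r with (/ INR (S N)); [lra|]. unfold Rdiv in Hge. lra. }
  apply (proj1 (dPO_lt_inv_S _ _ 0) Hlt1). lia.
Qed.

End FirstDifferenceMetric.

Lemma inv_lim_antitone {X} (f : X -> X) U y :
  inv_lim f U y -> forall m n, (m <= n)%nat -> forall i, subset (y n i) (y m i).
Proof.
  intros Hy m n Hmn. induction Hmn as [|n _ IH]; intros i p Hp; auto.
  apply IH. exact (proj2 (proj2 (Hy n) i) p Hp).
Qed.

Section Orbits.
Context {X : Type} (d : X -> X -> R) (f : X -> X).

Lemma orbit_segment_continuous :
  continuous_map d f -> forall x K e, 0 < e -> exists dl, 0 < dl /\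
  forall x', d x x' < dl -> forall j, (j <= K)%nat -> d (Nat.iter j f x) (Nat.iter j f x') < e.
Proof.
  intros Hf x K. induction K as [|K IH]; intros e He.
  - exists e. split; auto. intros x' Hx' j Hj. replace j with 0%nat by lia. exact Hx'.
  - destruct (Hf (Nat.iter K f x) e He) as [d1 [Hd1 Hstep]].
    destruct (IH (Rmin e d1) (Rmin_pos _ _ He Hd1)) as [dl [Hdl Hclose]].
    exists dl. split; auto. intros x' Hx' j Hj.
    destruct (Nat.eq_dec j (S K)) as [->|].
    + apply Hstep. eapply Rlt_le_trans; [apply Hclose; auto | apply Rmin_r].
    + eapply Rlt_le_trans; [apply Hclose; auto; lia | apply Rmin_l].
Qed.

Lemma orbit_segment_unif_continuous :
  unif_continuous_map d f -> forall K e, 0 < e -> exists dl, 0 < dl /\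
  forall x x', d x x' < dl -> forall j, (j <= K)%nat -> d (Nat.iter j f x) (Nat.iter j f x') < e.
Proof.
  intros Hf K. induction K as [|K IH]; intros e He.
  - exists e. split; auto. intros x x' Hx j Hj. replace j with 0%nat by lia. exact Hx.
  - destruct (Hf e He) as [d1 [Hd1 Hstep]].
    destruct (IH (Rmin e d1) (Rmin_pos _ _ He Hd1)) as [dl [Hdl Hclose]].
    exists dl. split; auto. intros x x' Hx j Hj.
    destruct (Nat.eq_dec j (S K)) as [->|].
    + apply Hstep. eapply Rlt_le_trans; [apply Hclose; auto | apply Rmin_r].
    + eapply Rlt_le_trans; [apply Hclose; auto; lia | apply Rmin_l].
Qed.

Lemma PO_pseudo_orbit V O s :
  (forall A, V A -> forall p q, A p -> A q -> d p q <= s) -> PO f V O ->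
  exists a : nat -> X, forall j, O j (a j) /\ d (f (a j)) (a (S j)) <= s.
Proof.
  intros Hdiam HO.
  destruct (choice (fun j p => O j p /\ O (S j) (f p))) as [a Ha].
  { intro j. apply HO. }
  exists a. intro j. split; [apply Ha|].
  apply (Hdiam (O (S j))); [apply HO | apply Ha | apply Ha].
Qed.

End Orbits.

Section Itineraries.
Context {X : Type} (d : X -> X -> R) (f : X -> X) (U : nat -> (X -> Prop) -> Prop).
Hypothesis d_metric : is_metric d.
Hypothesis U_partition : forall n, partition d (U n).
Hypothesis U_refine : forall n A, U (S n) A -> exists B, U n B /\ subset A B.
Hypothesis U_diam : forall e, 0 < e -> exists N, forall n, (N <= n)%nat ->
  forall O, U n O -> forall x y, O x -> O y -> d x y <= e.
Hypothesis U_gap : forall n, exists rho, 0 < rho /\ forall A B x1 x2,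
  U n A -> U n B -> A <> B -> A x1 -> B x2 -> rho <= d x1 x2.

Lemma dist_sym x y : d x y = d y x.
Proof. apply d_metric. Qed.

Lemma dist_triangle x y z : d x z <= d x y + d y z.
Proof. apply d_metric. Qed.

Lemma eq_of_common_cells p q : (forall n, exists A, U n A /\ A p /\ A q) -> p = q.
Proof.
  intro Hcommon. apply d_metric.
  destruct d_metric as [Hpos _]. specialize (Hpos p q).
  destruct (Rle_lt_dec (d p q) 0) as [|Hgt]; [lra|]. exfalso.
  destruct (U_diam (d p q / 2) ltac:(lra)) as [N HN].
  destruct (Hcommon N) as [A [HA [Hp Hq]]].
  pose proof (HN N (le_n N) A HA p q Hp Hq). lra.
Qed.

Definition cell n (p : X) : X -> Prop :=
  epsilon (inhabits (fun _ => False)) (fun A => U n A /\ A p).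

Lemma cell_spec n p : U n (cell n p) /\ cell n p p.
Proof. unfold cell. apply epsilon_spec, (proj2 (proj2 (U_partition n))). Qed.

Lemma cell_unique n p A : U n A -> A p -> cell n p = A.
Proof.
  intros HA Hp. destruct (cell_spec n p) as [Hcell Hpcell].
  apply NNPP. intro Hne. exact (proj1 (proj2 (U_partition n)) _ _ Hcell HA Hne p Hpcell Hp).
Qed.

Lemma cell_antitone m n p : (m <= n)%nat -> subset (cell n p) (cell m p).
Proof.
  induction 1 as [|n _ IH]; intros q Hq; auto. apply IH.
  destruct (U_refine n _ (proj1 (cell_spec (S n) p))) as [B [HB Hsub]].
  rewrite (cell_unique n p B HB (Hsub p (proj2 (cell_spec (S n) p)))). auto.
Qed.

Lemma cell_eq_le m n p q : (m <= n)%nat -> cell n p = cell n q -> cell m p = cell m q.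
Proof.
  intros Hmn Heq. symmetry. apply cell_unique; [apply cell_spec|].
  apply (cell_antitone m n p Hmn). rewrite Heq. apply cell_spec.
Qed.

Lemma cell_absorbs n : exists rho, 0 < rho /\
  forall A a b, U n A -> A a -> d a b < rho -> A b.
Proof.
  destruct (U_gap n) as [rho [Hrho Hsep]]. exists rho. split; auto.
  intros A a b HA Ha Hab. destruct (cell_spec n b) as [Hcell Hb].
  destruct (classic (A = cell n b)) as [->|Hne]; auto.
  pose proof (Hsep _ _ _ _ HA Hcell Hne Ha Hb). lra.
Qed.

Lemma cell_locally_constant n : exists rho, 0 < rho /\
  forall p q, d p q < rho -> cell n p = cell n q.
Proof.
  destruct (cell_absorbs n) as [rho [Hrho Habs]]. exists rho. split; auto.
  intros p q Hpq. symmetry. apply cell_unique; [apply cell_spec|].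
  apply (Habs _ p); auto; apply cell_spec.
Qed.

Definition itinerary (x : X) : nat -> nat -> X -> Prop :=
  fun n i => cell n (Nat.iter i f x).

Lemma itinerary_inv_lim x : inv_lim f U (itinerary x).
Proof.
  intro n. unfold itinerary. split.
  - intro i. split; [apply cell_spec|]. exists (Nat.iter i f x).
    split; [apply cell_spec | exact (proj2 (cell_spec n (Nat.iter (S i) f x)))].
  - intro i. split; [apply cell_spec|]. apply cell_antitone. lia.
Qed.

Lemma itinerary_shift x : itinerary (f x) = sigma_star (itinerary x).
Proof.
  unfold sigma_star, itinerary. extensionality n. extensionality i.
  now rewrite Nat.iter_succ_r.
Qed.

(* One gap rho_K suffices: the cells of level K refine those of every coarser level. *)
Lemma itinerary_agree K : exists rho, 0 < rho /\ forall x x',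
  (forall j, (j <= K)%nat -> d (Nat.iter j f x) (Nat.iter j f x') < rho) ->
  forall n j, (n <= K)%nat -> (j <= K)%nat -> itinerary x n j = itinerary x' n j.
Proof.
  destruct (cell_locally_constant K) as [rho [Hrho Hconst]]. exists rho. split; auto.
  intros x x' Hclose n j Hn Hj. apply (cell_eq_le n K); auto.
Qed.

Lemma itinerary_continuous : continuous_map d f -> forall x e, 0 < e ->
  exists dl, 0 < dl /\ forall x', d x x' < dl -> dPi (itinerary x) (itinerary x') < e.
Proof.
  intros Hf x e He.
  destruct (inv_S_lt_ex e He) as [K HK].
  destruct (itinerary_agree K) as [rho [Hrho Hagree]].
  destruct (orbit_segment_continuous d f Hf x K rho Hrho) as [dl [Hdl Hclose]].
  exists dl. split; auto. intros x' Hx'. apply (dPi_lt _ _ K e HK). auto.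
Qed.

Lemma itinerary_unif_continuous : unif_continuous_map d f -> forall e, 0 < e ->
  exists dl, 0 < dl /\ forall x x', d x x' < dl -> dPi (itinerary x) (itinerary x') < e.
Proof.
  intros Hf e He.
  destruct (inv_S_lt_ex e He) as [K HK].
  destruct (itinerary_agree K) as [rho [Hrho Hagree]].
  destruct (orbit_segment_unif_continuous d f Hf K rho Hrho) as [dl [Hdl Hclose]].
  exists dl. split; auto. intros x x' Hx. apply (dPi_lt _ _ K e HK). auto.
Qed.

Definition visits (y : nat -> nat -> X -> Prop) (x : X) : Prop :=
  forall n i, y n i (Nat.iter i f x).

Hypothesis f_continuous : continuous_map d f.
Hypothesis U_complete : complete_seq U.
Hypothesis f_shadowing : finite_shadowing d f.

Lemma inv_lim_cells_approached y x :
  inv_lim f U y -> (forall n, y n 0%nat x) ->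
  forall m i e, 0 < e -> exists a, y m i a /\ d (Nat.iter i f x) a < e.
Proof.
  intros Hy Hx m i e He.
  destruct (orbit_segment_continuous d f f_continuous x i (e / 2) ltac:(lra))
    as [d1 [Hd1 Horbit]].
  destruct (f_shadowing (Rmin (e / 2) (d1 / 2)) ltac:(apply Rmin_pos; lra))
    as [dl [Hdl Hshadow]].
  pose (s := Rmin d1 dl / 2).
  assert (Hs : 0 < s) by (unfold s; pose proof (Rmin_pos d1 dl Hd1 Hdl); lra).
  assert (Hs1 : s <= d1 / 2) by (unfold s; pose proof (Rmin_l d1 dl); lra).
  assert (Hs2 : s < dl) by (unfold s; pose proof (Rmin_r d1 dl); lra).
  destruct (U_diam s Hs) as [N HN].
  pose (n := max N m).
  destruct (PO_pseudo_orbit d f (U n) (y n) s (HN n ltac:(lia)) (proj1 (Hy n)))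
    as [a Ha].
  destruct (Hshadow i a) as [z Hz].
  { intros j _. pose proof (proj2 (Ha j)). lra. }
  exists (a i). split.
  { apply (inv_lim_antitone f U y Hy m n ltac:(lia)), Ha. }
  assert (Hxa : d x (a 0%nat) <= d1 / 2).
  { pose proof (HN n ltac:(lia) _ (proj1 (proj1 (Hy n) 0%nat)) _ _ (Hx n) (proj1 (Ha 0%nat))).
    lra. }
  assert (Hza : d z (a 0%nat) < d1 / 2).
  { pose proof (Hz 0%nat ltac:(lia)). pose proof (Rmin_r (e / 2) (d1 / 2)). simpl in *. lra. }
  assert (Hxz : d x z < d1).
  { pose proof (dist_triangle x (a 0%nat) z). rewrite (dist_sym (a 0%nat) z) in *. lra. }
  pose proof (Horbit z Hxz i (le_n i)).
  pose proof (Hz i (le_n i)). pose proof (Rmin_l (e / 2) (d1 / 2)).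
  pose proof (dist_triangle (Nat.iter i f x) (Nat.iter i f z) (a i)). lra.
Qed.

Lemma inv_lim_visited y : inv_lim f U y -> exists x, visits y x.
Proof.
  intro Hy.
  destruct (U_complete (fun n => y n 0%nat)) as [x Hx].
  - intro n. apply (proj1 (Hy n) 0%nat).
  - intro n. apply (proj2 (Hy n) 0%nat).
  - exists x. intros m i.
    destruct (cell_absorbs m) as [rho [Hrho Habs]].
    destruct (inv_lim_cells_approached y x Hy Hx m i rho Hrho) as [a [Ha Hclose]].
    apply (Habs _ a); [apply (proj1 (Hy m) i) | exact Ha |].
    now rewrite dist_sym.
Qed.

Hypothesis X_inhabited : inhabited X.

Definition realization (y : nat -> nat -> X -> Prop) : X := epsilon X_inhabited (visits y).

Lemma realization_visits y : inv_lim f U y -> visits y (realization y).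
Proof. intro Hy. unfold realization. apply epsilon_spec, inv_lim_visited, Hy. Qed.

Lemma realization_itinerary x : realization (itinerary x) = x.
Proof.
  apply eq_of_common_cells. intro n. exists (cell n x).
  split; [apply cell_spec|]. split; [|apply cell_spec].
  exact (realization_visits _ (itinerary_inv_lim x) n 0%nat).
Qed.

Lemma itinerary_realization y : inv_lim f U y -> itinerary (realization y) = y.
Proof.
  intro Hy. extensionality n. extensionality i.
  apply cell_unique; [apply (proj1 (Hy n) i) | apply realization_visits, Hy].
Qed.

Lemma realization_unif_continuous : forall e, 0 < e -> exists dl, 0 < dl /\
  forall y y', inv_lim f U y -> inv_lim f U y' -> dPi y y' < dl ->
  d (realization y) (realization y') < e.
Proof.
  intros e He. destruct (U_diam (e / 2) ltac:(lra)) as [N HN].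
  exists (/ INR (S N)). split; [apply inv_S_pos|].
  intros y y' Hy Hy' Hclose.
  pose proof (realization_visits y Hy N 0%nat) as Hvis.
  pose proof (realization_visits y' Hy' N 0%nat) as Hvis'.
  simpl in Hvis, Hvis'.
  rewrite <- (dPi_lt_inv_S y y' N Hclose) in Hvis'.
  pose proof (HN N (le_n N) _ (proj1 (proj1 (Hy N) 0%nat)) _ _ Hvis Hvis'). lra.
Qed.

Lemma itinerary_conjugacy : conjugacy d f U itinerary realization.
Proof.
  split; [exact itinerary_inv_lim|]. split; [exact realization_itinerary|].
  split; [exact itinerary_realization|]. split; [exact itinerary_shift|].
  split; [exact (itinerary_continuous f_continuous)|].
  intros y Hy e He. destruct (realization_unif_continuous e He) as [dl [Hdl Hg]].
  exists dl. split; [exact Hdl|]. intros y' Hy'. now apply Hg.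
Qed.

Lemma itinerary_uniform_homeo :
  unif_continuous_map d f -> uniform_homeo d f U itinerary realization.
Proof.
  intro Hf. split; [exact (itinerary_unif_continuous Hf) | exact realization_unif_continuous].
Qed.

End Itineraries.

Theorem theorem4p15 (X : Type) (d : X -> X -> R) (f : X -> X)
  (U : nat -> (X -> Prop) -> Prop) :
  dyn_system d f ->
  defining_sequence d U -> complete_seq U -> tame_seq d U ->
  finite_shadowing d f ->
  (exists h g, conjugacy d f U h g) /\
  (unif_continuous_map d f ->
     exists h g, conjugacy d f U h g /\ uniform_homeo d f U h g).
Proof.
  intros [X_inhabited [d_metric [_ f_continuous]]] [U_partition [U_refine _]]
    U_complete [U_diam U_gap] f_shadowing.
  split.
  - exists (itinerary f U), (realization f X_inhabited).
    apply itinerary_conjugacy; assumption.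
  - intro f_unif. exists (itinerary f U), (realization f X_inhabited).
    split; [apply itinerary_conjugacy | apply itinerary_uniform_homeo]; assumption.
Qed.
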